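(* Every almost reciprocal Puiseux monoid is atomic.
   Context: A Puiseux monoid is an additive submonoid of $(\mathbb{Q}_{\ge 0},+)$. For a positive rational $r = n/d$ in lowest terms, $\mathsf{d}(r) := d$. An almost reciprocal Puiseux monoid is a monoid of the form $\langle \frac{c_n}{d_n} \mid n \in \mathbb{N} \rangle$ (the submonoid of $\mathbb{Q}_{\ge 0}$ generated by these elements), where $(d_n)_{n\ge 1}$ is a strictly increasing sequence of positive integers whose terms are pairwise relatively prime, and $(c_n)_{n \ge 1}$ is a sequence of positive integers with $\gcd(c_n,d_n)=1$ for every $n$. An atom of $M$ is a nonzero element $a$ such that $a = x+y$ with $x,y \in M$ forces $x=0$ or $y=0$; $M$ is atomic if every element is a finite sum of atoms. *)

From mathcomp Require Import all_boot all_order all_algebra.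
Set Implicit Arguments. Unset Strict Implicit. Unset Printing Implicit Defensive.
Import Order.TTheory GRing.Theory Num.Theory.
Local Open Scope ring_scope.

(* A submonoid of (Q_{>=0},+) is represented by its membership predicate on rat. *)

Definition gen_monoid (g : nat -> rat) : rat -> Prop :=
  fun x => exists s : seq nat, x = \sum_(i <- s) g i.

Definition is_atom (M : rat -> Prop) (a : rat) : Prop :=
  [/\ M a, a != 0 &
     forall x y, M x -> M y -> a = x + y -> x = 0 \/ y = 0].

Definition atomic (M : rat -> Prop) : Prop :=
  forall x, M x -> exists s : seq rat,
      (forall a, a \in s -> is_atom M a) /\ x = \sum_(a <- s) a.

(* Data of an almost reciprocal Puiseux monoid <c_n / d_n | n>
   (sequences indexed from 0 instead of 1). *)
Definition almost_reciprocal_data (c d : nat -> nat) : Prop :=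
  [/\ (forall n, (0 < d n)%N),
      (forall m n, (m < n)%N -> (d m < d n)%N),
      (forall m n, m <> n -> coprime (d m) (d n)),
      (forall n, (0 < c n)%N) &
      (forall n, coprime (c n) (d n))].

Definition almost_reciprocal_monoid (c d : nat -> nat) : rat -> Prop :=
  gen_monoid (fun n => (c n)%:R / (d n)%:R).

From mathcomp Require Import all_boot all_order all_algebra.
From mathcomp Require Import ring.
From Stdlib Require Import Classical.
Import Order.TTheory GRing.Theory Num.Theory.

(* A generator c_n/d_n with d_n > 1 is an atom: since all generators are
   positive, a split of it into two nonzero elements cannot use c_n/d_n itself;
   but a sum of other generators c_i/d_i times the product P of their
   denominators is an integer, so d_n would divide c_n P, which is impossible
   as d_n is coprime to both c_n and P. Only d_0 can equal 1, and a generator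
   that is not an atom splits into generators other than itself, all of which
   are then atoms; so every generator, hence every element, is a sum of atoms. *)

Local Open Scope ring_scope.

Definition atom_sum (M : rat -> Prop) (x : rat) : Prop :=
  exists s : seq rat, (forall a, a \in s -> is_atom M a) /\ x = \sum_(a <- s) a.

Section AtomSums.
Variable M : rat -> Prop.

Lemma atom_sum0 : atom_sum M 0.
Proof. by exists [::]; rewrite big_nil. Qed.

Lemma atom_sumD x y : atom_sum M x -> atom_sum M y -> atom_sum M (x + y).
Proof.
move=> [s [sA ->]] [t [tA ->]]; exists (s ++ t); rewrite big_cat; split=> // a.
by rewrite mem_cat => /orP[/sA|/tA].
Qed.

Lemma atom_sum_atom a : is_atom M a -> atom_sum M a.
Proof. by exists [:: a]; rewrite big_seq1; split=> // b /[!inE] /eqP->. Qed.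

Lemma not_atom_split x :
  M x -> x != 0 -> ~ is_atom M x ->
  exists y z, [/\ M y, M z, y != 0, z != 0 & x = y + z].
Proof.
move=> Mx x0 not_atom; apply: NNPP => no_split; apply: not_atom; split=> // y z My Mz xE.
apply: NNPP => /not_or_and[/eqP y0 /eqP z0]; apply: no_split.
by exists y, z.
Qed.

End AtomSums.

Section PositivelyGeneratedMonoid.
Variable g : nat -> rat.
Hypothesis g_gt0 : forall i, 0 < g i.
Local Notation M := (gen_monoid g).

Lemma gen_monoid_gen n : M (g n).
Proof. by exists [:: n]; rewrite big_seq1. Qed.

Lemma gen_monoid_ge0 x : M x -> 0 <= x.
Proof. by move=> [s ->]; apply: sumr_ge0 => i _; apply: ltW. Qed.

Lemma gen_le_sum n s : n \in s -> g n <= \sum_(i <- s) g i.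
Proof.
move=> ns; rewrite (big_rem _ ns) /= lerDl.
by apply: gen_monoid_ge0; exists (rem n s).
Qed.

Lemma gen_notin_split n s y :
  M y -> y != 0 -> g n = \sum_(i <- s) g i + y -> n \notin s.
Proof.
move=> My y0 gnE; apply/negP => /gen_le_sum gn_le.
have y_gt0 : 0 < y by rewrite lt_def y0 gen_monoid_ge0.
by move: gn_le; rewrite {1}gnE gerDl leNgt y_gt0.
Qed.

Lemma gen_atom n :
  (forall u, n \notin u -> g n != \sum_(i <- u) g i) -> is_atom M (g n).
Proof.
move=> indecomposable; split; [exact: gen_monoid_gen | by rewrite gt_eqF |].
move=> _ _ [s ->] [t ->] gnE.
have [-> | s0] := eqVneq (\sum_(i <- s) g i) 0; first by left.
have [-> | t0] := eqVneq (\sum_(i <- t) g i) 0; first by right.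
have ns : n \notin s by apply: gen_notin_split gnE => //; exists t.
have nt : n \notin t by rewrite addrC in gnE; apply: gen_notin_split gnE => //; exists s.
have := indecomposable (s ++ t).
by rewrite mem_cat negb_or ns nt big_cat {1}gnE eqxx => /(_ isT).
Qed.

Lemma atom_sum_gen_sum s :
  (forall i, i \in s -> atom_sum M (g i)) -> atom_sum M (\sum_(i <- s) g i).
Proof.
move=> sA; rewrite big_seq; apply: big_ind => //; [exact: atom_sum0 | exact: atom_sumD].
Qed.

Lemma gen_atom_sum n0 :
  (forall i, i != n0 -> is_atom M (g i)) -> atom_sum M (g n0).
Proof.
move=> atoms; have [gn0_atom | not_atom] := classic (is_atom M (g n0)).
  exact: atom_sum_atom.
have gn0_neq0 : g n0 != 0 by rewrite gt_eqF.
have [_ [_ [[s ->] [t ->] s0 t0 gnE]]] :=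
  @not_atom_split _ _ (gen_monoid_gen n0) gn0_neq0 not_atom.
have ns : n0 \notin s by apply: gen_notin_split gnE => //; exists t.
have nt : n0 \notin t by rewrite addrC in gnE; apply: gen_notin_split gnE => //; exists s.
have avoid_n0 u : n0 \notin u -> forall i, i \in u -> atom_sum M (g i).
  by move=> nu i iu; apply/atom_sum_atom/atoms; apply: contraNneq nu => <-.
by rewrite gnE; apply: atom_sumD; apply: atom_sum_gen_sum; apply: avoid_n0.
Qed.

Lemma gen_monoid_atomic n0 :
  (forall i, i != n0 -> is_atom M (g i)) -> atomic M.
Proof.
move=> atoms x [s ->]; apply: atom_sum_gen_sum => i _.
have [-> | /atoms/atom_sum_atom //] := eqVneq i n0.
exact: gen_atom_sum.
Qed.

End PositivelyGeneratedMonoid.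

Lemma sum_frac_mul_prod_den (c d : nat -> nat) (u : seq nat) :
  {in u, forall i, (0 < d i)%N} ->
  exists N : nat,
    (\sum_(i <- u) (c i)%:R / (d i)%:R) * (\prod_(i <- u) d i)%:R = N%:R :> rat.
Proof.
move=> d_gt0; exists (\sum_(i <- u) c i * (\prod_(j <- u) d j %/ d i))%N.
rewrite big_distrl natr_sum; apply: eq_big_seq => i iu.
have dP : (d i %| \prod_(j <- u) d j)%N by rewrite (big_rem _ iu) dvdn_mulr.
have di_neq0 : (d i)%:R != 0 :> rat by rewrite pnatr_eq0 -lt0n d_gt0.
by rewrite -{1}(divnK dP) !natrM /= mulrCA divfK // mulrC.
Qed.

Lemma frac_neq_sum_coprime_den (c d : nat -> nat) n (u : seq nat) :
  (1 < d n)%N -> coprime (c n) (d n) ->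
  {in u, forall i, (0 < d i)%N} -> {in u, forall i, coprime (d n) (d i)} ->
  (c n)%:R / (d n)%:R != \sum_(i <- u) (c i)%:R / (d i)%:R :> rat.
Proof.
move=> dn_gt1 cd_cop d_gt0 d_cop; apply/eqP => fracE.
have [N NE] := @sum_frac_mul_prod_den c d u d_gt0.
set P := (\prod_(i <- u) d i)%N in NE.
have dn_neq0 : (d n)%:R != 0 :> rat by rewrite pnatr_eq0 -lt0n ltnW.
have cP_eq : (c n * P = N * d n)%N.
  by apply/eqP; rewrite -(eqr_nat rat) !natrM -NE -fracE; apply/eqP; field.
have dP_cop : coprime (d n) P.
  rewrite /P big_seq; apply: (big_ind (coprime (d n))) => [|x y dx dy|//].
    by rewrite coprimen1.
  by rewrite coprimeMr dx.
have dn_dvd_P : (d n %| P)%N.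
  by rewrite -(@Gauss_dvdr _ (c n)) 1?coprime_sym // cP_eq dvdn_mull.
by move: dP_cop; rewrite /coprime (gcdn_idPl dn_dvd_P) gtn_eqF.
Qed.

Section AlmostReciprocal.
Variables c d : nat -> nat.
Hypothesis data : almost_reciprocal_data c d.

Lemma almost_reciprocal_gen_gt0 n : 0 < (c n)%:R / (d n)%:R :> rat.
Proof. by have [d_gt0 _ _ c_gt0 _] := data; rewrite divr_gt0 ?ltr0n. Qed.

Lemma almost_reciprocal_den_gt1 n : n != 0%N -> (1 < d n)%N.
Proof.
have [d_gt0 d_incr _ _ _] := data.
by case: n => // n _; apply: leq_ltn_trans (d_gt0 0%N) (d_incr _ _ _).
Qed.

Lemma almost_reciprocal_atom n :
  n != 0%N -> is_atom (almost_reciprocal_monoid c d) ((c n)%:R / (d n)%:R).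
Proof.
have [d_gt0 _ d_cop _ cd_cop] := data; move=> n_neq0.
apply: gen_atom => [i | u nu]; first exact: almost_reciprocal_gen_gt0.
apply: frac_neq_sum_coprime_den => [||i _|i iu].
- exact: almost_reciprocal_den_gt1.
- exact: cd_cop.
- exact: d_gt0.
- by apply: d_cop => ni; rewrite ni iu in nu.
Qed.

End AlmostReciprocal.

Theorem corollary3p6 (c d : nat -> nat) :
  almost_reciprocal_data c d -> atomic (almost_reciprocal_monoid c d).
Proof.
move=> data; apply: (@gen_monoid_atomic _ _ 0%N) => [i | i i_neq0].
  exact: almost_reciprocal_gen_gt0.
exact: almost_reciprocal_atom.
Qed.
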